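(* Let $f\in\mathrm{Homeo}_+(\mathbb{R})$ satisfy $f(x+1)=f(x)+2$ for all $x\in\mathbb{R}$ and $f(0)=0$. Then there is a unique group homomorphism $\theta_f:GA(\mathbb{Q}_2)\to\mathrm{Homeo}_+(\mathbb{R})$ with $\theta_f(T_1)=T_1$ and $\theta_f(D)=f$, and this homomorphism is injective.
   Context: $\mathbb{Q}_2=\{p/2^q:p,q\in\mathbb{Z}\}$ denotes the dyadic rationals. $GA(\mathbb{Q}_2)$ is the group under composition of affine maps $x\mapsto 2^nx+r$ of $\mathbb{R}$ with $n\in\mathbb{Z}$, $r\in\mathbb{Q}_2$; $T_1(x)=x+1$, $D(x)=2x$. $\mathrm{Homeo}_+(\mathbb{R})$ is the group of increasing self-homeomorphisms of $\mathbb{R}$. *)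

From Stdlib Require Import Reals ZArith.
Open Scope R_scope.

Definition dyadic (r : R) : Prop :=
  exists p q : Z, r = IZR p / powerRZ 2 q.

Definition GA (g : R -> R) : Prop :=
  exists (n : Z) (r : R), dyadic r /\ forall x, g x = powerRZ 2 n * x + r.

Definition T1 : R -> R := fun x => x + 1.
Definition D : R -> R := fun x => 2 * x.

Definition HomeoPlus (f : R -> R) : Prop :=
  (exists g : R -> R, continuity f /\ continuity g /\
     (forall x, g (f x) = x) /\ (forall y, f (g y) = y)) /\
  (forall x y, x < y -> f x < f y).

Definition fcomp (g h : R -> R) : R -> R := fun x => g (h x).

Definition IsHomGA (theta : (R -> R) -> (R -> R)) : Prop :=
  (forall g, GA g -> HomeoPlus (theta g)) /\
  (forall g h, GA g -> GA h -> theta (fcomp g h) = fcomp (theta g) (theta h)).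

From Stdlib Require Import Reals ZArith ClassicalEpsilon FunctionalExtensionality Lra Lia.
Open Scope R_scope.

(* Every element of GA(Q_2) can be written g = D^(-k) T_m D^(k+n), i.e.
   g x = 2^n x + m / 2^k, so any homomorphism with T1 |-> T1 and D |-> f must
   send g to f^(-k) T_m f^(k+n); uniqueness follows.  Conversely this formula
   is independent of the chosen (n, k, m) because f^j T_m = T_(2^j m) f^j,
   which is where f (x + 1) = f x + 2 enters, and the same relation makes it
   multiplicative.  For injectivity, equal images force f^(n1 - n2) to be a
   translation fixing 0, hence the identity; since f^j 1 = 2^j for j >= 0,
   this gives n1 = n2. *)

Lemma powerRZ2_inj (a b : Z) : powerRZ 2 a = powerRZ 2 b -> a = b.
Proof.
  intro E; rewrite !powerRZ_Rpower in E by lra.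
  destruct (Z.lt_trichotomy a b) as [L|[L|L]]; auto;
    apply IZR_lt, (Rpower_lt 2) in L; lra.
Qed.

(* [k] is a natural number so that the representation can always be refined
   by enlarging the denominator (see [affine_rep_raise]). *)
Definition affine_rep (g : R -> R) (n : Z) (k : nat) (m : Z) : Prop :=
  forall x, g x = powerRZ 2 n * x + IZR m / 2 ^ k.

Lemma affine_rep_GA g n k m : affine_rep g n k m -> GA g.
Proof.
  intro Hg. exists n, (IZR m / 2 ^ k). split; [|exact Hg].
  exists m, (Z.of_nat k). now rewrite pow_powerRZ.
Qed.

Lemma GA_affine_rep g : GA g -> exists n k m, affine_rep g n k m.
Proof.
  intros (n & r & (p & q & ->) & Hg).
  destruct (Z.leb_spec 0 q).
  - exists n, (Z.to_nat q), p. intro x. now rewrite Hg, pow_powerRZ, Z2Nat.id.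
  - exists n, 0%nat, (p * 2 ^ (- q))%Z. intro x.
    rewrite Hg, mult_IZR, <- (Z2Nat.id (- q)), <- pow_IZR, pow_powerRZ, Z2Nat.id by lia.
    replace q with (- (- q))%Z at 1 by ring. rewrite powerRZ_neg'.
    assert (0 < powerRZ 2 (- q)) by (apply powerRZ_lt; lra).
    simpl; field; lra.
Qed.

Lemma affine_rep_raise g n k m j :
  affine_rep g n k m -> affine_rep g n (k + j) (m * 2 ^ Z.of_nat j).
Proof.
  intros Hg x. rewrite Hg, mult_IZR, <- pow_IZR, pow_add.
  assert (2 ^ k <> 0) by (apply pow_nonzero; lra).
  assert (2 ^ j <> 0) by (apply pow_nonzero; lra).
  field; auto.
Qed.

Lemma affine_rep_comp g h n1 k1 m1 n2 k2 m2 (j : nat) :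
  affine_rep g n1 k1 m1 -> affine_rep h n2 k2 m2 ->
  (Z.of_nat k1 + n1 = Z.of_nat (k2 + j))%Z ->
  affine_rep (fcomp g h) (n1 + n2) k1 (m1 + m2 * 2 ^ Z.of_nat j).
Proof.
  intros Hg Hh Ej x. unfold fcomp.
  rewrite Hg, Hh, plus_IZR, mult_IZR, <- pow_IZR, powerRZ_add by lra.
  assert (E : powerRZ 2 n1 * 2 ^ k1 = 2 ^ k2 * 2 ^ j).
  { rewrite <- pow_add, !pow_powerRZ, <- powerRZ_add, <- Ej by lra. f_equal; ring. }
  assert (2 ^ k1 <> 0) by (apply pow_nonzero; lra).
  assert (2 ^ k2 <> 0) by (apply pow_nonzero; lra).
  replace (powerRZ 2 n1) with (2 ^ k2 * 2 ^ j / 2 ^ k1) by (rewrite <- E; field; auto).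
  field; auto.
Qed.

Lemma affine_rep_unique g n k m n' k' m' :
  affine_rep g n k m -> affine_rep g n' k' m' ->
  n = n' /\ (m * 2 ^ Z.of_nat k' = m' * 2 ^ Z.of_nat k)%Z.
Proof.
  intros Hg Hg'.
  pose proof (Hg 0) as A0; pose proof (Hg' 0) as B0.
  pose proof (Hg 1) as A1; pose proof (Hg' 1) as B1.
  split; [apply powerRZ2_inj; lra|].
  apply eq_IZR. rewrite !mult_IZR, <- !pow_IZR.
  assert (2 ^ k <> 0) by (apply pow_nonzero; lra).
  assert (2 ^ k' <> 0) by (apply pow_nonzero; lra).
  assert (E : IZR m / 2 ^ k = IZR m' / 2 ^ k') by lra.
  apply (f_equal (fun t => t * 2 ^ k * 2 ^ k')) in E.
  field_simplify in E; auto. lra.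
Qed.

Lemma homeo_comp g h : HomeoPlus g -> HomeoPlus h -> HomeoPlus (fcomp g h).
Proof.
  intros [[gi [Cg [Cgi [G1 G2]]]] Ig] [[hi [Ch [Chi [H1 H2]]]] Ih].
  split.
  - exists (fcomp hi gi). unfold fcomp. repeat split.
    + exact (continuity_comp h g Ch Cg).
    + exact (continuity_comp gi hi Cgi Chi).
    + intro x. now rewrite G1, H1.
    + intro y. now rewrite H2, G2.
  - intros x y L. apply Ig, Ih, L.
Qed.

Lemma homeo_translation c : HomeoPlus (fun x => x + c).
Proof.
  assert (C : forall d, continuity (fun x => x + d)).
  { intro d. apply (continuity_plus (fun x => x) (fun _ => d)).
    - apply derivable_continuous, derivable_id.
    - now apply continuity_const. }
  split.
  - exists (fun y => y + - c). split; [|split]; [auto|auto|split; intro; ring].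
  - intros; lra.
Qed.

Lemma homeo_inj h x y : HomeoPlus h -> h x = h y -> x = y.
Proof.
  intros [[hi [_ [_ [H1 _]]]] _] E. now rewrite <- (H1 x), E, H1.
Qed.

Lemma homeo_inverse f : HomeoPlus f ->
  exists fi, HomeoPlus fi /\ (forall x, fi (f x) = x) /\ (forall y, f (fi y) = y).
Proof.
  intros [[fi [Cf [Cfi [F1 F2]]]] If]. exists fi. repeat split; auto.
  - exists f. repeat split; auto.
  - intros x y L. destruct (Rlt_le_dec (fi x) (fi y)) as [|[L'|E]]; auto.
    + apply If in L'. rewrite !F2 in L'. lra.
    + apply (f_equal f) in E. rewrite !F2 in E. lra.
Qed.

Lemma homeo_iter h k : HomeoPlus h -> HomeoPlus (Nat.iter k h).
Proof.
  intro Hh. induction k as [|k IH].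
  - replace (Nat.iter 0 h) with (fun x : R => x + 0)
      by (extensionality x; simpl; ring).
    apply homeo_translation.
  - exact (homeo_comp h _ Hh IH).
Qed.

Section Conjugation.

Variables f fi : R -> R.
Hypothesis fi_f : forall x, fi (f x) = x.
Hypothesis f_fi : forall y, f (fi y) = y.

Definition fpow (z : Z) : R -> R :=
  if (0 <=? z)%Z then Nat.iter (Z.to_nat z) f else Nat.iter (Z.to_nat (- z)) fi.

Lemma fpow_succ z x : fpow (z + 1) x = f (fpow z x).
Proof.
  unfold fpow. destruct (Z.leb_spec 0 z), (Z.leb_spec 0 (z + 1)); try lia.
  - now replace (Z.to_nat (z + 1)) with (S (Z.to_nat z)) by lia.
  - replace z with (-1)%Z by lia. simpl. now rewrite f_fi.
  - replace (Z.to_nat (- z)) with (S (Z.to_nat (- (z + 1)))) by lia.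
    simpl. now rewrite f_fi.
Qed.

Lemma fpow_pred z x : fpow (z - 1) x = fi (fpow z x).
Proof.
  replace z with ((z - 1) + 1)%Z at 2 by ring. now rewrite fpow_succ, fi_f.
Qed.

Lemma fpow_add a b x : fpow (a + b) x = fpow a (fpow b x).
Proof.
  revert x. induction a as [|a IH|a IH] using Z.peano_ind; intro x.
  - reflexivity.
  - rewrite <- Z.add_1_r, Z.add_shuffle0, !fpow_succ. now f_equal.
  - rewrite <- Z.sub_1_r, <- Z.add_sub_swap, !fpow_pred. now f_equal.
Qed.

Lemma fpow_opp_l a x : fpow (- a) (fpow a x) = x.
Proof. now rewrite <- fpow_add, Z.add_opp_diag_l. Qed.

Lemma fpow_opp_r a x : fpow a (fpow (- a) x) = x.
Proof. now rewrite <- fpow_add, Z.add_opp_diag_r. Qed.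

Lemma homeo_fpow z : HomeoPlus f -> HomeoPlus fi -> HomeoPlus (fpow z).
Proof. intros Hf Hfi. unfold fpow. destruct (0 <=? z)%Z; now apply homeo_iter. Qed.

Hypothesis f_translate : forall x, f (x + 1) = f x + 2.

Lemma f_translate_int m x : f (x + IZR m) = f x + 2 * IZR m.
Proof.
  revert x. induction m as [|m IH|m IH] using Z.peano_ind; intro x.
  - rewrite !Rplus_0_r. ring.
  - rewrite <- Z.add_1_r, plus_IZR, <- Rplus_assoc, f_translate, IH. ring.
  - rewrite <- Z.sub_1_r, minus_IZR.
    assert (E := f_translate (x + (IZR m - 1))).
    replace (x + (IZR m - 1) + 1) with (x + IZR m) in E by ring.
    rewrite IH in E. lra.
Qed.

Lemma fpow_translate (j : nat) m x :
  fpow (Z.of_nat j) (x + IZR m) = fpow (Z.of_nat j) x + IZR (m * 2 ^ Z.of_nat j).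
Proof.
  induction j as [|j IH].
  - now rewrite Z.mul_1_r.
  - rewrite Nat2Z.inj_succ, <- Z.add_1_r, !fpow_succ, IH, f_translate_int.
    rewrite Z.pow_add_r, Z.pow_1_r, !mult_IZR by lia. ring.
Qed.

(* The image of the map with representation (n, k, m), i.e. of
   D^(-k) T_m D^(k+n). *)
Definition lift (n : Z) (k : nat) (m : Z) : R -> R :=
  fun x => fpow (- Z.of_nat k) (fpow (Z.of_nat k + n) x + IZR m).

Lemma lift_raise n k m j : lift n k m = lift n (k + j) (m * 2 ^ Z.of_nat j).
Proof.
  extensionality x. unfold lift. rewrite Nat2Z.inj_add.
  replace (Z.of_nat k + Z.of_nat j + n)%Z with (Z.of_nat j + (Z.of_nat k + n))%Z by ring.
  rewrite Z.opp_add_distr, !fpow_add, <- fpow_translate.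
  now rewrite fpow_opp_l.
Qed.

Lemma lift_comp n1 k1 m1 n2 k2 m2 (j : nat) :
  (Z.of_nat k1 + n1 = Z.of_nat (k2 + j))%Z ->
  lift (n1 + n2) k1 (m1 + m2 * 2 ^ Z.of_nat j) = fcomp (lift n1 k1 m1) (lift n2 k2 m2).
Proof.
  intro Ej. extensionality x. unfold lift, fcomp.
  rewrite Ej, Nat2Z.inj_add, (Z.add_comm (Z.of_nat k2)), (fpow_add (Z.of_nat j)).
  rewrite fpow_opp_r, fpow_translate, <- fpow_add.
  replace (Z.of_nat j + (Z.of_nat k2 + n2))%Z with (Z.of_nat k1 + (n1 + n2))%Z by lia.
  now rewrite plus_IZR, Rplus_assoc, Rplus_comm with (r1 := IZR m1).
Qed.

Hypothesis homeo_f : HomeoPlus f.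
Hypothesis homeo_fi : HomeoPlus fi.

Lemma homeo_lift n k m : HomeoPlus (lift n k m).
Proof.
  apply (homeo_comp (fpow (- Z.of_nat k)) (fun x => fpow (Z.of_nat k + n) x + IZR m)).
  - now apply homeo_fpow.
  - apply (homeo_comp (fun x => x + IZR m)); [apply homeo_translation|now apply homeo_fpow].
Qed.

Hypothesis f_0 : f 0 = 0.

Lemma fpow_0 z : fpow z 0 = 0.
Proof.
  induction z as [|z IH|z IH] using Z.peano_ind.
  - reflexivity.
  - now rewrite <- Z.add_1_r, fpow_succ, IH.
  - now rewrite <- Z.sub_1_r, fpow_pred, IH, <- f_0, fi_f.
Qed.

Lemma fpow_nat_1 (j : nat) : fpow (Z.of_nat j) 1 = 1 -> j = 0%nat.
Proof.
  intro E. pose proof (fpow_translate j 1 0) as T.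
  rewrite Rplus_0_l, fpow_0, Rplus_0_l, E, Z.mul_1_l in T. apply eq_IZR in T.
  destruct j as [|j]; [reflexivity|].
  rewrite Nat2Z.inj_succ, Z.pow_succ_r in T by lia.
  assert (0 < 2 ^ Z.of_nat j)%Z by (apply Z.pow_pos_nonneg; lia). lia.
Qed.

Lemma fpow_eq_id z : (forall x, fpow z x = x) -> z = 0%Z.
Proof.
  intro Hz. destruct (Z.leb_spec 0 z).
  - enough (Z.to_nat z = 0%nat) by lia.
    apply fpow_nat_1. rewrite Z2Nat.id by lia. apply Hz.
  - enough (Z.to_nat (- z) = 0%nat) by lia.
    apply fpow_nat_1. rewrite Z2Nat.id by lia.
    rewrite <- (Hz 1) at 1. apply fpow_opp_l.
Qed.

Lemma lift_inj n1 n2 k m1 m2 : lift n1 k m1 = lift n2 k m2 -> n1 = n2 /\ m1 = m2.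
Proof.
  intro E.
  assert (E1 : forall x, fpow (Z.of_nat k + n1) x + IZR m1 = fpow (Z.of_nat k + n2) x + IZR m2).
  { intro x. apply (f_equal (fun h => fpow (Z.of_nat k) (h x))) in E.
    unfold lift in E. now rewrite !fpow_opp_r in E. }
  assert (E2 : forall y, fpow (n1 - n2) y + IZR m1 = y + IZR m2).
  { intro y. specialize (E1 (fpow (- (Z.of_nat k + n2)) y)).
    rewrite fpow_opp_r, <- fpow_add in E1.
    now replace (Z.of_nat k + n1 + - (Z.of_nat k + n2))%Z with (n1 - n2)%Z in E1 by ring. }
  assert (Em : m1 = m2).
  { apply eq_IZR. specialize (E2 0). rewrite fpow_0 in E2. lra. }
  subst m2. split; [|reflexivity].
  enough (n1 - n2 = 0)%Z by lia.
  apply fpow_eq_id. intro y. specialize (E2 y). lra.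
Qed.

Lemma lift_well_defined g n k m n' k' m' :
  affine_rep g n k m -> affine_rep g n' k' m' -> lift n k m = lift n' k' m'.
Proof.
  intros Hg Hg'. destruct (affine_rep_unique _ _ _ _ _ _ _ Hg Hg') as [<- E].
  now rewrite (lift_raise n k m k'), (lift_raise n k' m' k), E, Nat.add_comm.
Qed.

(* Outside GA the predicate is empty and [theta g] is an unspecified function. *)
Definition theta (g : R -> R) : R -> R :=
  epsilon (inhabits (fun x : R => x))
    (fun h => exists n k m, affine_rep g n k m /\ h = lift n k m).

Lemma theta_affine g n k m : affine_rep g n k m -> theta g = lift n k m.
Proof.
  intro Hg. unfold theta.
  destruct (epsilon_spec (inhabits (fun x : R => x))
              (fun h => exists n k m, affine_rep g n k m /\ h = lift n k m))
    as (n' & k' & m' & Hg' & ->).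
  { now exists (lift n k m), n, k, m. }
  eapply lift_well_defined; eassumption.
Qed.

Lemma theta_comp g h : GA g -> GA h -> theta (fcomp g h) = fcomp (theta g) (theta h).
Proof.
  intros Gg Gh.
  destruct (GA_affine_rep g Gg) as (n1 & k1 & m1 & Hg).
  destruct (GA_affine_rep h Gh) as (n2 & k2 & m2 & Hh).
  (* Raise the denominator of g so that its new [k1 + n1] is at least [k2]. *)
  pose proof (affine_rep_raise _ _ _ _ (k2 + Z.abs_nat n1) Hg) as Hg'.
  set (K := (k1 + (k2 + Z.abs_nat n1))%nat) in Hg'.
  set (J := Z.to_nat (Z.of_nat K + n1 - Z.of_nat k2)).
  assert (EJ : (Z.of_nat K + n1 = Z.of_nat (k2 + J))%Z) by (unfold J, K; lia).
  rewrite (theta_affine _ _ _ _ (affine_rep_comp _ _ _ _ _ _ _ _ _ Hg' Hh EJ)).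
  rewrite (theta_affine _ _ _ _ Hg'), (theta_affine _ _ _ _ Hh).
  now apply lift_comp.
Qed.

Lemma theta_hom : IsHomGA theta.
Proof.
  split; [|exact theta_comp].
  intros g Gg. destruct (GA_affine_rep g Gg) as (n & k & m & Hg).
  rewrite (theta_affine _ _ _ _ Hg). apply homeo_lift.
Qed.

Lemma theta_inj g h : GA g -> GA h -> theta g = theta h -> g = h.
Proof.
  intros Gg Gh E.
  destruct (GA_affine_rep g Gg) as (n1 & k1 & m1 & Hg).
  destruct (GA_affine_rep h Gh) as (n2 & k2 & m2 & Hh).
  pose proof (affine_rep_raise _ _ _ _ k2 Hg) as Hg'.
  pose proof (affine_rep_raise _ _ _ _ k1 Hh) as Hh'.
  rewrite Nat.add_comm in Hh'.
  rewrite (theta_affine _ _ _ _ Hg'), (theta_affine _ _ _ _ Hh') in E.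
  destruct (lift_inj _ _ _ _ _ E) as [<- Em].
  extensionality x. now rewrite Hg', Hh', Em.
Qed.

End Conjugation.

Definition dilation (z : Z) : R -> R := fun x => powerRZ 2 z * x.
Definition translation (m : Z) : R -> R := fun x => x + IZR m.

Lemma affine_rep_dilation z : affine_rep (dilation z) z 0 0.
Proof. intro x. unfold dilation. simpl. field. Qed.

Lemma affine_rep_translation m : affine_rep (translation m) 0 0 m.
Proof. intro x. unfold translation. simpl. field. Qed.

Lemma affine_rep_T1 : affine_rep T1 0 0 1.
Proof. intro x. unfold T1. simpl. field. Qed.

Lemma affine_rep_D : affine_rep D 1 0 0.
Proof. intro x. unfold D. simpl. field. Qed.

Lemma affine_rep_decomp g n k m : affine_rep g n k m ->
  g = fcomp (dilation (- Z.of_nat k)) (fcomp (translation m) (dilation (Z.of_nat k + n))).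
Proof.
  intro Hg. extensionality x. unfold fcomp, dilation, translation.
  rewrite Hg, powerRZ_neg', powerRZ_add, <- pow_powerRZ by lra.
  assert (2 ^ k <> 0) by (apply pow_nonzero; lra).
  field; auto.
Qed.

Lemma Z_iter_unique (h : R -> R) (u v : Z -> R -> R) :
  (forall x y, h x = h y -> x = y) ->
  (forall x, u 0%Z x = v 0%Z x) ->
  (forall z x, u (z + 1)%Z x = h (u z x)) ->
  (forall z x, v (z + 1)%Z x = h (v z x)) ->
  forall z x, u z x = v z x.
Proof.
  intros Hinj H0 Hu Hv z. induction z as [|z IH|z IH] using Z.peano_ind; intro x.
  - apply H0.
  - now rewrite <- Z.add_1_r, Hu, Hv, IH.
  - apply Hinj. rewrite <- Hu, <- Hv, <- Z.sub_1_r, Z.sub_add. apply IH.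
Qed.

Section Uniqueness.

Variable th : (R -> R) -> (R -> R).
Hypothesis th_hom : IsHomGA th.

Lemma hom_id : th (fun x => x) = (fun x => x).
Proof.
  destruct th_hom as [Hhomeo Hcomp].
  assert (Gid : GA (fun x : R => x))
    by (apply (affine_rep_GA _ 0 0 0); intro x; simpl; field).
  pose proof (Hcomp _ _ Gid Gid) as E.
  extensionality x. apply (homeo_inj (th (fun x => x))); [now apply Hhomeo|].
  symmetry. exact (f_equal (fun h => h x) E).
Qed.

Hypothesis th_T1 : th T1 = T1.

Lemma hom_translation m x : th (translation m) x = translation m x.
Proof.
  destruct th_hom as [_ Hcomp].
  apply (Z_iter_unique T1 (fun m => th (translation m)) translation); unfold T1.
  - intros y z; lra.
  - intro y. replace (translation 0) with (fun x : R => x)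
      by (extensionality z; unfold translation; ring).
    now rewrite hom_id.
  - intros z y. replace (translation (z + 1)) with (fcomp T1 (translation z))
      by (extensionality w; unfold fcomp, T1, translation; rewrite plus_IZR; ring).
    rewrite Hcomp, th_T1
      by (eapply affine_rep_GA; apply affine_rep_T1 || apply affine_rep_translation).
    reflexivity.
  - intros z y. unfold translation. rewrite plus_IZR. ring.
Qed.

Variables f fi : R -> R.
Hypothesis fi_f : forall x, fi (f x) = x.
Hypothesis f_fi : forall y, f (fi y) = y.
Hypothesis th_D : th D = f.

Lemma hom_dilation z x : th (dilation z) x = fpow f fi z x.
Proof.
  destruct th_hom as [_ Hcomp].
  apply (Z_iter_unique f (fun z => th (dilation z)) (fpow f fi)).
  - intros y w E. now rewrite <- (fi_f y), E, fi_f.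
  - intro y. replace (dilation 0) with (fun x : R => x)
      by (extensionality w; unfold dilation; simpl; ring).
    now rewrite hom_id.
  - intros w y. replace (dilation (w + 1)) with (fcomp D (dilation w))
      by (extensionality v; unfold fcomp, D, dilation; rewrite powerRZ_add by lra; simpl; ring).
    rewrite Hcomp, th_D
      by (eapply affine_rep_GA; apply affine_rep_D || apply affine_rep_dilation).
    reflexivity.
  - intros w y. now apply fpow_succ.
Qed.

Lemma hom_affine g n k m : affine_rep g n k m -> th g = lift f fi n k m.
Proof.
  destruct th_hom as [_ Hcomp].
  intro Hg. rewrite (affine_rep_decomp _ _ _ _ Hg).
  assert (Rinner : affine_rep (fcomp (translation m) (dilation (Z.of_nat k + n)))
                              (Z.of_nat k + n) 0 m).
  { intro x. unfold fcomp, translation, dilation. simpl. field. }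
  rewrite Hcomp, Hcomp
    by (eapply affine_rep_GA; apply affine_rep_dilation || apply affine_rep_translation
        || exact Rinner).
  extensionality x. unfold fcomp, lift.
  now rewrite !hom_dilation, hom_translation.
Qed.

End Uniqueness.

Theorem mainTheorem4 (f : R -> R) (Hf : HomeoPlus f)
  (Hper : forall x, f (x + 1) = f x + 2) (H0 : f 0 = 0) :
  exists theta : (R -> R) -> (R -> R),
    IsHomGA theta /\ theta T1 = T1 /\ theta D = f /\
    (forall theta' : (R -> R) -> (R -> R),
        IsHomGA theta' -> theta' T1 = T1 -> theta' D = f ->
        forall g, GA g -> theta' g = theta g) /\
    (forall g h, GA g -> GA h -> theta g = theta h -> g = h).
Proof.
  destruct (homeo_inverse f Hf) as (fi & Hfi & fi_f & f_fi).
  exists (theta f fi). split; [now apply theta_hom|]. split; [|split; [|split]].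
  - rewrite (theta_affine f fi fi_f f_fi Hper _ _ _ _ affine_rep_T1).
    extensionality x. reflexivity.
  - rewrite (theta_affine f fi fi_f f_fi Hper _ _ _ _ affine_rep_D).
    extensionality x. apply Rplus_0_r.
  - intros th Hth HT HD g Gg.
    destruct (GA_affine_rep g Gg) as (n & k & m & Hg).
    rewrite (hom_affine th Hth HT f fi fi_f f_fi HD _ _ _ _ Hg).
    now rewrite (theta_affine f fi fi_f f_fi Hper _ _ _ _ Hg).
  - now apply theta_inj.
Qed.
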